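(* For every $\gamma>0$ and every $E>0$ there exists a density operator $\varrho$ with $0<\operatorname{tr}[\varrho H]\le E+1$ such that $$\left\|\widetilde\varrho_{-}-\frac{{\cal N}_{-}(\gamma)[\varrho]}{\operatorname{tr}\big[{\cal N}_{-}(\gamma)[\varrho]\big]}\right\|_1\ \ge\ \sqrt{\frac{E}{E+1}},$$ and, likewise, for every $\gamma>0$ and $E>0$ there exists a density operator $\varrho$ with $0<\operatorname{tr}[\varrho H]\le E+1$ such that the same inequality holds with $\widetilde\varrho_{-},{\cal N}_{-}(\gamma)$ replaced by $\widetilde\varrho_{+},{\cal N}_{+}(\gamma)$.
   Context: ${\cal H}$ is a separable Hilbert space with orthonormal (Fock) basis $\{|n\rangle\}_{n=0}^{\infty}$; $a=\sum_{n\ge1}\sqrt{n}\,|n-1\rangle\langle n|$, $a^{\dagger}=\sum_{n\ge0}\sqrt{n+1}\,|n+1\rangle\langle n|$, $H=a^{\dagger}a$. For a density operator $\varrho$, $\operatorname{tr}[\varrho H^k]=\sum_n n^k\langle n|\varrho|n\rangle$. Ideal outputs: $\widetilde\varrho_{-}=a\varrho a^{\dagger}/\operatorname{tr}[a\varrho a^{\dagger}]$, $\widetilde\varrho_{+}=a^{\dagger}\varrho a/\operatorname{tr}[a^{\dagger}\varrho a]$ (defined for $0<\operatorname{tr}[\varrho H]<\infty$). For $\gamma>0$: ${\cal N}_{-}(\gamma)[\varrho]=(e^{2\gamma}-1)\,a e^{-\gamma H}\varrho e^{-\gamma H}a^{\dagger}$, ${\cal N}_{+}(\gamma)[\varrho]=(e^{2\gamma}-1)\,e^{-\gamma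 H}a^{\dagger}\varrho a e^{-\gamma H}$. $\|X\|_1=\operatorname{tr}\sqrt{X^{\dagger}X}$. *)

From Stdlib Require Import Reals ClassicalEpsilon.
Open Scope R_scope.

Definition C : Type := (R * R)%type.
Definition Re (z : C) : R := fst z.
Definition Im (z : C) : R := snd z.
Definition RtoC (r : R) : C := (r, 0).
Definition C0 : C := (0, 0).
Definition C1 : C := (1, 0).
Definition Cadd (z w : C) : C := (fst z + fst w, snd z + snd w).
Definition Copp (z : C) : C := (- fst z, - snd z).
Definition Csub (z w : C) : C := Cadd z (Copp w).
Definition Cmul (z w : C) : C :=
  (fst z * fst w - snd z * snd w, fst z * snd w + snd z * fst w).
Definition Cconj (z : C) : C := (fst z, - snd z).
Definition Cinv (z : C) : C :=
  (fst z / (fst z ^ 2 + snd z ^ 2), - snd z / (fst z ^ 2 + snd z ^ 2)).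

Fixpoint Csum (n : nat) (f : nat -> C) : C :=
  match n with O => C0 | S m => Cadd (Csum m f) (f m) end.
Fixpoint Rsum (n : nat) (f : nat -> R) : R :=
  match n with O => 0 | S m => Rsum m f + f m end.

(** * Operators on the Fock space, as matrices in the Fock basis
    [X i j = <i| X |j>]. *)
Definition Op : Type := nat -> nat -> C.

Definition supported (d : nat) (X : Op) : Prop :=
  forall i j, (d <= i)%nat \/ (d <= j)%nat -> X i j = C0.

(** Matrix product with the inner index running over [0, n).  It coincides
    with the operator product whenever one of the factors vanishes outside
    the first [n] basis vectors on the contracted side (all uses below). *)
Definition opmul (n : nat) (X Y : Op) : Op :=
  fun i j => Csum n (fun k => Cmul (X i k) (Y k j)).
Definition opsub (X Y : Op) : Op := fun i j => Csub (X i j) (Y i j).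
Definition opscale (c : C) (X : Op) : Op := fun i j => Cmul c (X i j).
Definition adj (X : Op) : Op := fun i j => Cconj (X j i).
Definition trace (n : nat) (X : Op) : C := Csum n (fun i => X i i).

(** annihilation a = sum_{n>=1} sqrt n |n-1><n|, creation a^dagger = adj a *)
Definition ann : Op :=
  fun i j => if Nat.eqb j (S i) then RtoC (sqrt (INR j)) else C0.
Definition cre : Op := adj ann.
(** e^{-gamma H}, H = a^dagger a = sum n |n><n| *)
Definition expmH (g : R) : Op :=
  fun i j => if Nat.eqb i j then RtoC (exp (- g * INR i)) else C0.

Definition energy (d : nat) (rho : Op) : R :=
  Rsum d (fun i => INR i * Re (rho i i)).

Definition density (d : nat) (rho : Op) : Prop :=
  supported d rho /\
  (forall i j, rho i j = Cconj (rho j i)) /\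
  (forall v : nat -> C,
      0 <= Re (Csum d (fun i => Csum d (fun j =>
                 Cmul (Cconj (v i)) (Cmul (rho i j) (v j)))))) /\
  trace d rho = C1.

(** * Trace norm ||X||_1 = tr sqrt(X^dagger X) = sum of singular values,
    computed through a singular value decomposition X = U S V^dagger on the
    first n basis vectors. *)
Definition unitary (n : nat) (U : Op) : Prop :=
  forall i j, (i < n)%nat -> (j < n)%nat ->
    opmul n (adj U) U i j = (if Nat.eqb i j then C1 else C0).

Definition is_svd (n : nat) (X U : Op) (s : nat -> R) (V : Op) : Prop :=
  unitary n U /\ unitary n V /\ (forall k, 0 <= s k) /\
  forall i j, (i < n)%nat -> (j < n)%nat ->
    X i j = Csum n (fun k => Cmul (U i k) (Cmul (RtoC (s k)) (Cconj (V j k)))).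

Definition tnorm (n : nat) (X : Op) : R :=
  epsilon (inhabits 0)
    (fun t => exists U s V, is_svd n X U s V /\ t = Rsum n s).

(** * The ideal outputs and the noisy channels, for rho supported in d
    (all computations are exact with truncation n = S d). *)
Definition normalize (n : nat) (X : Op) : Op := opscale (Cinv (trace n X)) X.

Definition rho_minus (d : nat) (rho : Op) : Op :=
  normalize (S d) (opmul (S d) (opmul (S d) ann rho) cre).
Definition rho_plus (d : nat) (rho : Op) : Op :=
  normalize (S d) (opmul (S d) (opmul (S d) cre rho) ann).

Definition N_minus (g : R) (d : nat) (rho : Op) : Op :=
  let n := S d in
  opscale (RtoC (exp (2 * g) - 1))
    (opmul n (opmul n (opmul n ann (expmH g)) rho) (opmul n (expmH g) cre)).
Definition N_plus (g : R) (d : nat) (rho : Op) : Op :=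
  let n := S d in
  opscale (RtoC (exp (2 * g) - 1))
    (opmul n (opmul n (opmul n (expmH g) cre) rho) (opmul n ann (expmH g))).

From Pilot Require Import Defs.
From Stdlib Require Import Reals ClassicalEpsilon Lra Lia FunctionalExtensionality.
Open Scope R_scope.

(* Both counterexamples are diagonal in the Fock basis, so every operator involved is
   diagonal, and the trace norm of a diagonal operator dominates the l1-norm of its
   diagonal (pair it with the unit columns of any singular value decomposition).
   For rho = (7/8 - c)|0><0| + 1/8 |1><1| + c |m+1><m+1| with (m+1) c = 3/8, the ideal
   output a rho a^dagger puts weight 1/4 on |0> and 3/4 on |m>; N_-(g) further
   multiplies the weight of |n> by a constant times e^{-2g(n+1)}, which for
   e^{2gm} >= 9 moves at least 3/4 of the mass to |0>.  For rho = (1-c)|0><0| + c |k><k|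
   with k c = E + 1, the ideal output a^dagger rho a puts weight at most 1/(E+2) on |1>,
   while the noisy one puts at least 1/2 + 1/(E+2) there once e^{2gk} is large.  Either
   way the two outputs are at trace distance at least 1 >= sqrt(E/(E+1)). *)

Lemma Cadd_0_l z : Cadd C0 z = z.
Proof. destruct z; unfold Cadd, C0; simpl; f_equal; ring. Qed.
Lemma Cadd_0_r z : Cadd z C0 = z.
Proof. destruct z; unfold Cadd, C0; simpl; f_equal; ring. Qed.
Lemma Cmul_0_l z : Cmul C0 z = C0.
Proof. destruct z; unfold Cmul, C0; simpl; f_equal; ring. Qed.
Lemma Cmul_0_r z : Cmul z C0 = C0.
Proof. destruct z; unfold Cmul, C0; simpl; f_equal; ring. Qed.
Lemma Cmul_RtoC a b : Cmul (RtoC a) (RtoC b) = RtoC (a * b).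
Proof. unfold Cmul, RtoC; simpl; f_equal; ring. Qed.

Lemma Csum_ext n f g : (forall k, (k < n)%nat -> f k = g k) -> Csum n f = Csum n g.
Proof.
  induction n as [|n IHn]; intros H; simpl; auto.
  rewrite IHn by (intros; apply H; lia).
  rewrite H by lia; reflexivity.
Qed.

Lemma Csum_delta n f m : (forall k, k <> m -> f k = C0) ->
  Csum n f = if Nat.ltb m n then f m else C0.
Proof.
  intros H; induction n as [|n IHn]; simpl.
  - destruct (Nat.ltb_spec m 0); [lia | reflexivity].
  - rewrite IHn. destruct (Nat.eq_dec n m) as [<- | Hnm].
    + destruct (Nat.ltb_spec n n), (Nat.ltb_spec n (S n)); try lia.
      apply Cadd_0_l.
    + rewrite (H n Hnm), Cadd_0_r.
      destruct (Nat.ltb_spec m n), (Nat.ltb_spec m (S n)); auto; lia.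
Qed.

Lemma Re_Csum n f : Re (Csum n f) = Rsum n (fun k => Re (f k)).
Proof. induction n as [|n IHn]; simpl; auto. unfold Re in *; simpl; rewrite IHn; auto. Qed.

Lemma Csum_RtoC n f : Csum n (fun k => RtoC (f k)) = RtoC (Rsum n f).
Proof.
  induction n as [|n IHn]; simpl; auto.
  rewrite IHn; unfold Cadd, RtoC; simpl; f_equal; ring.
Qed.

Lemma Rsum_ext n f g : (forall k, (k < n)%nat -> f k = g k) -> Rsum n f = Rsum n g.
Proof.
  induction n as [|n IHn]; intros H; simpl; auto.
  rewrite IHn by (intros; apply H; lia).
  rewrite H by lia; reflexivity.
Qed.

Lemma Rsum_plus n f g : Rsum n (fun k => f k + g k) = Rsum n f + Rsum n g.
Proof. induction n as [|n IHn]; simpl; [ring | rewrite IHn; ring]. Qed.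

Lemma Rsum_scal n c f : Rsum n (fun k => c * f k) = c * Rsum n f.
Proof. induction n as [|n IHn]; simpl; [ring | rewrite IHn; ring]. Qed.

Lemma Rsum_le n f g : (forall k, (k < n)%nat -> f k <= g k) -> Rsum n f <= Rsum n g.
Proof.
  induction n as [|n IHn]; intros H; simpl; [lra|].
  pose proof (H n (Nat.lt_succ_diag_r n)).
  assert (Rsum n f <= Rsum n g) by (apply IHn; intros; apply H; lia).
  lra.
Qed.

Lemma Rsum_nonneg n f : (forall k, (k < n)%nat -> 0 <= f k) -> 0 <= Rsum n f.
Proof.
  induction n as [|n IHn]; intros H; simpl; [lra|].
  pose proof (H n (Nat.lt_succ_diag_r n)).
  assert (0 <= Rsum n f) by (apply IHn; intros; apply H; lia).
  lra.
Qed.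

Lemma Rsum_swap n m F :
  Rsum n (fun i => Rsum m (fun k => F i k)) = Rsum m (fun k => Rsum n (fun i => F i k)).
Proof.
  induction n as [|n IHn]; simpl.
  - induction m as [|m IHm]; simpl; [reflexivity | rewrite <- IHm; ring].
  - rewrite IHn, <- Rsum_plus; reflexivity.
Qed.

Definition atom (a : nat) (u : R) (i : nat) : R := if Nat.eqb i a then u else 0.

Lemma Rsum_atom n a u : Rsum n (atom a u) = if Nat.ltb a n then u else 0.
Proof.
  unfold atom; induction n as [|n IHn]; simpl.
  - destruct (Nat.ltb_spec a 0); [lia | reflexivity].
  - rewrite IHn. destruct (Nat.eqb_spec n a) as [<- | Hna].
    + destruct (Nat.ltb_spec n n), (Nat.ltb_spec n (S n)); try lia; ring.
    + destruct (Nat.ltb_spec a n), (Nat.ltb_spec a (S n)); try lia; ring.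
Qed.

Lemma atom_mul (f : nat -> R) a u i : f i * atom a u i = atom a (f a * u) i.
Proof. unfold atom; destruct (Nat.eqb_spec i a) as [-> | _]; ring. Qed.

Lemma Rsum_mul_atom n (f : nat -> R) a u :
  Rsum n (fun i => f i * atom a u i) = if Nat.ltb a n then f a * u else 0.
Proof. rewrite (Rsum_ext _ _ (atom a (f a * u))), Rsum_atom; auto using atom_mul. Qed.

Lemma atom_S a u i : atom (S a) u (S i) = atom a u i.
Proof. reflexivity. Qed.

Lemma atom_0_S u i : atom 0 u (S i) = 0.
Proof. reflexivity. Qed.

Lemma INR_mul_atom_pred a u i : INR i * atom a u (pred i) = atom (S a) (INR (S a) * u) i.
Proof.
  unfold atom; destruct i as [|i]; cbn [pred Nat.eqb]; [rewrite INR_0; ring |].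
  destruct (Nat.eqb_spec i a) as [-> | _]; ring.
Qed.

Lemma Rsum_ge_two n f p q : (forall i, (i < n)%nat -> 0 <= f i) ->
  p <> q -> (p < n)%nat -> (q < n)%nat -> f p + f q <= Rsum n f.
Proof.
  intros Hf Hpq Hp Hq.
  apply Rle_trans with (Rsum n (fun i => atom p (f p) i + atom q (f q) i)).
  - rewrite Rsum_plus, !Rsum_atom.
    destruct (Nat.ltb_spec p n), (Nat.ltb_spec q n); try lia; lra.
  - apply Rsum_le; intros k Hk; pose proof (Hf k Hk); unfold atom.
    destruct (Nat.eqb_spec k p), (Nat.eqb_spec k q); subst; lia || lra.
Qed.

Ltac simpl_nat_tests := repeat (first
  [ rewrite Nat.eqb_refl
  | match goal with
    | |- context [Nat.eqb ?a ?b] => first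
        [ rewrite (proj2 (Nat.eqb_neq a b)) by lia | rewrite (proj2 (Nat.eqb_eq a b)) by lia ]
    | |- context [Nat.ltb ?a ?b] => first
        [ rewrite (proj2 (Nat.ltb_lt a b)) by lia | rewrite (proj2 (Nat.ltb_ge a b)) by lia ]
    end ]).

Definition diag (f : nat -> R) : Op := fun i j => if Nat.eqb i j then RtoC (f i) else C0.
Definition lower (f : nat -> R) : Op := fun i j => if Nat.eqb j (S i) then RtoC (f j) else C0.
Definition raise (f : nat -> R) : Op := fun i j => if Nat.eqb i (S j) then RtoC (f i) else C0.

Lemma ann_lower : ann = lower (fun j => sqrt (INR j)).
Proof. reflexivity. Qed.

Lemma cre_raise : cre = raise (fun i => sqrt (INR i)).
Proof.
  extensionality i; extensionality j; unfold cre, adj, ann, raise.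
  destruct (Nat.eqb i (S j)); unfold Cconj, RtoC, C0; simpl; f_equal; ring.
Qed.

Lemma expmH_diag g : expmH g = diag (fun i => exp (- g * INR i)).
Proof. reflexivity. Qed.

Lemma diag_ext f h : (forall i, f i = h i) -> diag f = diag h.
Proof. intros H; extensionality i; extensionality j; unfold diag; rewrite H; auto. Qed.

Lemma opmul_lower_diag n f h :
  opmul n (lower f) (diag h) = lower (fun j => if Nat.ltb j n then f j * h j else 0).
Proof.
  extensionality i; extensionality j; unfold opmul.
  rewrite (Csum_delta _ _ j).
  - unfold lower, diag; simpl_nat_tests.
    destruct (Nat.ltb_spec j n), (Nat.eqb_spec j (S i)); simpl_nat_tests;
      rewrite ?Cmul_RtoC, ?Cmul_0_l; reflexivity.
  - intros k Hk; unfold diag; simpl_nat_tests; apply Cmul_0_r.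
Qed.

Lemma opmul_diag_raise n e f :
  opmul n (diag e) (raise f) = raise (fun i => if Nat.ltb i n then e i * f i else 0).
Proof.
  extensionality i; extensionality j; unfold opmul.
  rewrite (Csum_delta _ _ i).
  - unfold raise, diag; simpl_nat_tests.
    destruct (Nat.ltb_spec i n), (Nat.eqb_spec i (S j)); simpl_nat_tests;
      rewrite ?Cmul_RtoC, ?Cmul_0_r; reflexivity.
  - intros k Hk; unfold diag; simpl_nat_tests; apply Cmul_0_l.
Qed.

Lemma opmul_lower_raise n f h :
  opmul n (lower f) (raise h) = diag (fun i => if Nat.ltb (S i) n then f (S i) * h (S i) else 0).
Proof.
  extensionality i; extensionality j; unfold opmul.
  rewrite (Csum_delta _ _ (S i)).
  - unfold raise, diag, lower; simpl_nat_tests.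
    destruct (Nat.ltb_spec (S i) n), (Nat.eqb_spec i j); subst; simpl_nat_tests;
      rewrite ?Cmul_RtoC, ?Cmul_0_r; reflexivity.
  - intros k Hk; unfold lower; simpl_nat_tests; apply Cmul_0_l.
Qed.

Lemma opmul_raise_diag n f h :
  opmul n (raise f) (diag h) = raise (fun i => if Nat.ltb (pred i) n then f i * h (pred i) else 0).
Proof.
  extensionality i; extensionality j; unfold opmul.
  rewrite (Csum_delta _ _ j).
  - unfold raise, diag; simpl_nat_tests.
    destruct (Nat.eqb_spec i (S j)); subst; simpl; simpl_nat_tests.
    + destruct (Nat.ltb_spec j n); rewrite ?Cmul_RtoC; reflexivity.
    + rewrite Cmul_0_l; destruct (Nat.ltb j n); reflexivity.
  - intros k Hk; unfold diag; simpl_nat_tests; apply Cmul_0_r.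
Qed.

Lemma opmul_raise_lower n f h : opmul n (raise f) (lower h) =
  diag (fun i => match i with O => 0 | S m => if Nat.ltb m n then f i * h i else 0 end).
Proof.
  extensionality i; extensionality j; unfold opmul; destruct i as [|p].
  - rewrite (Csum_delta _ _ 0).
    + unfold raise, diag; simpl; rewrite Cmul_0_l.
      destruct j, (Nat.ltb 0 n); reflexivity.
    + intros k Hk; unfold raise; simpl; apply Cmul_0_l.
  - rewrite (Csum_delta _ _ p).
    + unfold raise, diag, lower; simpl_nat_tests.
      destruct (Nat.ltb_spec p n), (Nat.eqb_spec (S p) j); subst; simpl_nat_tests;
        rewrite ?Cmul_RtoC, ?Cmul_0_r; reflexivity.
    + intros k Hk; unfold raise; simpl_nat_tests; apply Cmul_0_l.
Qed.

Lemma scale_diag c f : opscale (RtoC c) (diag f) = diag (fun i => c * f i).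
Proof.
  extensionality i; extensionality j; unfold opscale, diag.
  destruct (Nat.eqb i j); [apply Cmul_RtoC | apply Cmul_0_r].
Qed.

Lemma sub_diag f h : opsub (diag f) (diag h) = diag (fun i => f i - h i).
Proof.
  extensionality i; extensionality j; unfold opsub, diag, Csub, Cadd, Copp.
  destruct (Nat.eqb i j); unfold RtoC, C0; simpl; f_equal; ring.
Qed.

Lemma trace_diag n f : trace n (diag f) = RtoC (Rsum n f).
Proof.
  unfold trace; rewrite <- Csum_RtoC; apply Csum_ext.
  intros k _; unfold diag; simpl_nat_tests; reflexivity.
Qed.

Lemma normalize_diag n f : Rsum n f <> 0 ->
  normalize n (diag f) = diag (fun i => f i / Rsum n f).
Proof.
  intros H; unfold normalize; rewrite trace_diag.
  extensionality i; extensionality j; unfold opscale, diag.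
  destruct (Nat.eqb i j).
  - unfold Cmul, Cinv, RtoC; simpl; f_equal; field; auto.
  - apply Cmul_0_r.
Qed.

(** * A lower bound for the trace norm *)

Definition Cnorm2 (z : Defs.C) : R := fst z * fst z + snd z * snd z.

Lemma unitary_col_norm n U k : unitary n U -> (k < n)%nat ->
  Rsum n (fun i => Cnorm2 (U i k)) = 1.
Proof.
  intros HU Hk; specialize (HU k k Hk Hk); rewrite Nat.eqb_refl in HU.
  apply (f_equal Re) in HU; unfold opmul in HU; rewrite Re_Csum in HU.
  transitivity (Re Defs.C1); [| reflexivity].
  rewrite <- HU; apply Rsum_ext; intros i _.
  unfold Re, Cnorm2, Cmul, adj, Cconj; simpl; ring.
Qed.

Lemma svd_diag_le n X U s V : is_svd n X U s V ->
  Rsum n (fun i => Rabs (Re (X i i))) <= Rsum n s.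
Proof.
  intros (HU & HV & Hs & HX).
  set (sg i := if Rle_dec 0 (Re (X i i)) then 1 else -1).
  assert (Hsg : forall i, Rabs (Re (X i i)) = sg i * Re (X i i) /\ sg i * sg i = 1).
  { intros i; unfold sg; destruct (Rle_dec 0 (Re (X i i))).
    - rewrite Rabs_right; lra.
    - rewrite Rabs_left; lra. }
  set (cross i k := fst (U i k) * fst (V i k) + snd (U i k) * snd (V i k)).
  rewrite (Rsum_ext n _ (fun i => Rsum n (fun k => s k * (sg i * cross i k)))).
  2:{ intros i Hi; rewrite (proj1 (Hsg i)), HX by auto.
      rewrite Re_Csum, <- Rsum_scal; apply Rsum_ext; intros k _.
      unfold cross, Re, Cmul, RtoC, Cconj; simpl; ring. }
  rewrite Rsum_swap; apply Rsum_le; intros k Hk; rewrite Rsum_scal.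
  (* [2 |sg <u, v>| <= |u|^2 + |v|^2] for the unit columns [u = U(.,k)], [v = V(.,k)] *)
  assert (Rsum n (fun i => sg i * cross i k) <= 1).
  { apply Rle_trans with
      (Rsum n (fun i => / 2 * (Cnorm2 (U i k) + Cnorm2 (V i k)))).
    - apply Rsum_le; intros i _; destruct (Hsg i) as [_ Hsg2].
      unfold cross, Cnorm2.
      set (a := fst (U i k)); set (b := snd (U i k)).
      set (c := fst (V i k)); set (d := snd (V i k)).
      pose proof (Rle_0_sqr (a - sg i * c)); pose proof (Rle_0_sqr (b - sg i * d)).
      unfold Rsqr in *; nra.
    - rewrite Rsum_scal, Rsum_plus, !unitary_col_norm by auto; lra. }
  specialize (Hs k); nra.
Qed.

Lemma tnorm_ge_diag n X : (exists U s V, is_svd n X U s V) ->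
  Rsum n (fun i => Rabs (Re (X i i))) <= tnorm n X.
Proof.
  intros (U & s & V & H); unfold tnorm.
  set (P t := exists U s V, is_svd n X U s V /\ t = Rsum n s).
  destruct (epsilon_spec (inhabits 0) P) as (U' & s' & V' & Hsvd & ->).
  - exists (Rsum n s), U, s, V; auto.
  - eapply svd_diag_le; eauto.
Qed.

Lemma unitary_diag_sign n sg : (forall i, sg i * sg i = 1) -> unitary n (diag sg).
Proof.
  intros Hsg i j Hi Hj; unfold opmul.
  rewrite (Csum_delta _ _ i).
  - unfold adj, diag; simpl_nat_tests.
    destruct (Nat.eqb_spec i j) as [<- | _].
    + simpl_nat_tests; unfold Cmul, Cconj, RtoC, Defs.C1; simpl.
      f_equal; [rewrite <- (Hsg i) |]; ring.
    + apply Cmul_0_r.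
  - intros k Hk; unfold adj, diag; simpl_nat_tests.
    unfold Cmul, Cconj, C0; simpl; f_equal; ring.
Qed.

Lemma diag_has_svd n f : exists U s V, is_svd n (diag f) U s V.
Proof.
  set (sg i := if Rle_dec 0 (f i) then 1 else -1).
  assert (Hsg : forall i, sg i * Rabs (f i) = f i /\ sg i * sg i = 1).
  { intros i; unfold sg; destruct (Rle_dec 0 (f i)).
    - rewrite Rabs_right; lra.
    - rewrite Rabs_left; lra. }
  exists (diag sg), (fun i => Rabs (f i)), (diag (fun _ => 1)).
  split; [|split; [|split]].
  - apply unitary_diag_sign; apply Hsg.
  - apply unitary_diag_sign; intros; ring.
  - intros k; apply Rabs_pos.
  - intros i j Hi Hj; rewrite (Csum_delta _ _ i).
    + unfold diag; simpl_nat_tests.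
      destruct (Nat.eqb_spec i j) as [<- | Hij].
      * simpl_nat_tests; unfold Cmul, Cconj, RtoC; simpl.
        f_equal; [rewrite <- (proj1 (Hsg i)) at 1 |]; ring.
      * simpl_nat_tests; unfold Cmul, Cconj, RtoC, C0; simpl; f_equal; ring.
    + intros k Hk; unfold diag; simpl_nat_tests; apply Cmul_0_l.
Qed.

Lemma tnorm_diag_ge n f : Rsum n (fun i => Rabs (f i)) <= tnorm n (diag f).
Proof.
  eapply Rle_trans; [| apply tnorm_ge_diag, diag_has_svd].
  right; apply Rsum_ext; intros k _; unfold diag; simpl_nat_tests; reflexivity.
Qed.

Lemma density_diag d w : (forall i, 0 <= w i) -> (forall i, (d <= i)%nat -> w i = 0) ->
  Rsum d w = 1 -> density d (diag w).
Proof.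
  intros Hpos Hsupp Hsum; split; [|split; [|split]].
  - intros i j Hij; unfold diag.
    destruct (Nat.eqb_spec i j) as [<- | _]; [rewrite Hsupp by lia |]; reflexivity.
  - intros i j; unfold diag.
    destruct (Nat.eqb_spec i j); subst; simpl_nat_tests;
      unfold Cconj, RtoC, C0; simpl; f_equal; ring.
  - intros v; rewrite Re_Csum.
    rewrite (Rsum_ext d _ (fun i => w i * Cnorm2 (v i))).
    + apply Rsum_nonneg; intros k _; specialize (Hpos k); unfold Cnorm2; nra.
    + intros i Hi; rewrite (Csum_delta _ _ i).
      * unfold diag; simpl_nat_tests; unfold Re, Cnorm2, Cmul, Cconj, RtoC; simpl; ring.
      * intros k Hk; unfold diag; simpl_nat_tests; rewrite Cmul_0_l; apply Cmul_0_r.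
  - rewrite trace_diag, Hsum; reflexivity.
Qed.

Lemma energy_diag d w : energy d (diag w) = Rsum d (fun i => INR i * w i).
Proof. unfold energy; apply Rsum_ext; intros k _; unfold diag; simpl_nat_tests; reflexivity. Qed.

Definition damping (g : R) (n : nat) : R := (exp (2 * g) - 1) * exp (- g * INR n) ^ 2.

Lemma damping_pos g n : 0 < g -> 0 < damping g n.
Proof.
  intros Hg; unfold damping; apply Rmult_lt_0_compat.
  - assert (1 < exp (2 * g)) by (rewrite <- exp_0; apply exp_increasing; lra); lra.
  - apply pow_lt, exp_pos.
Qed.

Lemma damping_add g a k : damping g (a + k) * exp (2 * g * INR k) = damping g a.
Proof.
  unfold damping; rewrite plus_INR.
  replace (- g * (INR a + INR k)) with (- g * INR a + - (g * INR k)) by ring.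
  replace (2 * g * INR k) with (g * INR k + g * INR k) by ring.
  rewrite !exp_plus, exp_Ropp.
  pose proof (exp_pos (g * INR k)); field; lra.
Qed.

Lemma sqrt_INR_mul n : sqrt (INR n) * sqrt (INR n) = INR n.
Proof. apply sqrt_sqrt, pos_INR. Qed.

Ltac square_sqrt_INR n :=
  let s := fresh "s" in
  let Hs := fresh "Hs" in
  pose proof (sqrt_INR_mul n) as Hs; set (s := sqrt (INR n)) in *; rewrite <- Hs; ring.

Section DiagonalInput.

Variables (d : nat) (w : nat -> R).
Hypothesis w_supp : forall i, (d <= i)%nat -> w i = 0.

Lemma rho_minus_diag :
  rho_minus d (diag w) = normalize (S d) (diag (fun i => INR (S i) * w (S i))).
Proof.
  unfold rho_minus; rewrite ann_lower, cre_raise, opmul_lower_diag, opmul_lower_raise.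
  f_equal; apply diag_ext; intros i.
  destruct (Nat.ltb_spec (S i) (S d)).
  - square_sqrt_INR (S i).
  - rewrite w_supp by lia; ring.
Qed.

Lemma N_minus_diag g :
  N_minus g d (diag w) = diag (fun i => damping g (S i) * (INR (S i) * w (S i))).
Proof.
  unfold N_minus; rewrite ann_lower, cre_raise, expmH_diag.
  rewrite !opmul_lower_diag, opmul_diag_raise, opmul_lower_raise, scale_diag.
  apply diag_ext; intros i; unfold damping.
  destruct (Nat.ltb_spec (S i) (S d)).
  - square_sqrt_INR (S i).
  - rewrite w_supp by lia; ring.
Qed.

Lemma rho_plus_diag :
  rho_plus d (diag w) = normalize (S d) (diag (fun i => INR i * w (pred i))).
Proof.
  unfold rho_plus; rewrite ann_lower, cre_raise, opmul_raise_diag, opmul_raise_lower.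
  f_equal; apply diag_ext; intros [|i]; [simpl; ring|]; simpl pred.
  destruct (Nat.ltb_spec i (S d)).
  - square_sqrt_INR (S i).
  - rewrite w_supp by lia; ring.
Qed.

Lemma N_plus_diag g :
  N_plus g d (diag w) = diag (fun i => damping g i * (INR i * w (pred i))).
Proof.
  unfold N_plus; rewrite ann_lower, cre_raise, expmH_diag.
  rewrite opmul_diag_raise, opmul_raise_diag, opmul_lower_diag, opmul_raise_lower, scale_diag.
  apply diag_ext; intros [|i]; unfold damping; [simpl; ring|]; simpl pred.
  destruct (Nat.ltb_spec i (S d)), (Nat.ltb_spec (S i) (S d));
    first [lia | square_sqrt_INR (S i) | rewrite w_supp by lia; ring].
Qed.

End DiagonalInput.

Lemma Rsum_two_atoms n a b u v : a <> b -> (a < n)%nat -> (b < n)%nat ->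
  Rsum n (fun i => atom a u i + atom b v i) = u + v.
Proof. intros; rewrite Rsum_plus, !Rsum_atom; simpl_nat_tests; reflexivity. Qed.

Lemma tnorm_two_atoms_ge n a b u v (lam f : nat -> R) :
  a <> b -> (a < n)%nat -> (b < n)%nat -> 0 < u -> 0 < v -> 0 < lam a -> 0 < lam b ->
  (forall i, f i = atom a u i + atom b v i) ->
  2 * Rabs (lam a * u / (lam a * u + lam b * v) - u / (u + v)) <=
  tnorm n (opsub (normalize n (diag f)) (normalize n (diag (fun i => lam i * f i)))).
Proof.
  intros Hab Ha Hb Hu Hv Hla Hlb Hf.
  assert (Hlf : forall i, lam i * f i = atom a (lam a * u) i + atom b (lam b * v) i).
  { intros i; rewrite Hf, Rmult_plus_distr_l, !(atom_mul lam); reflexivity. }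
  rewrite (diag_ext _ _ Hf), (diag_ext _ _ Hlf), !normalize_diag, !Rsum_two_atoms, sub_diag
    by (auto; rewrite ?Rsum_two_atoms by auto; nra).
  eapply Rle_trans; [| apply tnorm_diag_ge].
  eapply Rle_trans; [| apply (Rsum_ge_two _ _ a b); auto; intros; apply Rabs_pos].
  unfold atom; simpl_nat_tests.
  set (p := u / (u + v)); set (r := lam a * u / (lam a * u + lam b * v)).
  (* both normalized vectors sum to 1, so their [b]-entries differ by minus the [a]-entries *)
  replace ((0 + v) / (u + v) - (0 + lam b * v) / (lam a * u + lam b * v)) with (r - p)
    by (unfold p, r; field; nra).
  replace ((u + 0) / (u + v) - (lam a * u + 0) / (lam a * u + lam b * v)) with (- (r - p))
    by (unfold p, r; field; nra).
  rewrite Rabs_Ropp; lra.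
Qed.

(** * The two counterexamples *)

Lemma le_ratio q x y : 0 < x -> 0 < y -> q * y <= (1 - q) * x -> q <= x / (x + y).
Proof.
  intros Hx Hy H.
  assert (x / (x + y) * (x + y) = x) by (field; lra).
  nra.
Qed.

Lemma exists_nat_exp_ge g A M : 0 < g -> exists k, A <= INR k /\ M <= exp (2 * g * INR k).
Proof.
  intros Hg.
  destruct (INR_archimed 1 A) as [k1 Hk1]; [lra|].
  destruct (INR_archimed (2 * g) M) as [k2 Hk2]; [lra|].
  exists (k1 + k2)%nat; rewrite plus_INR.
  pose proof (pos_INR k1); pose proof (pos_INR k2).
  pose proof (exp_ineq1_le (2 * g * (INR k1 + INR k2))).
  split; nra.
Qed.

Lemma sqrt_ratio_le_twice_abs E x : 0 < E -> 1 / 2 <= x -> sqrt (E / (E + 1)) <= 2 * Rabs x.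
Proof.
  intros HE Hx.
  apply Rle_trans with (sqrt 1).
  - apply sqrt_le_1_alt.
    apply Rmult_le_reg_r with (E + 1); [lra|].
    unfold Rdiv; rewrite Rmult_assoc, Rinv_l by lra; lra.
  - rewrite sqrt_1; pose proof (Rle_abs x); lra.
Qed.
Lemma minus_weight_gap l0 lm : 0 < lm -> 9 * lm <= l0 ->
  1 / 2 <= l0 * (1 / 8) / (l0 * (1 / 8) + lm * (3 / 8)) - 1 / 8 / (1 / 8 + 3 / 8).
Proof.
  intros Hlm Hl.
  assert (3 / 4 <= l0 * (1 / 8) / (l0 * (1 / 8) + lm * (3 / 8))) by (apply le_ratio; lra).
  replace (1 / 8 / (1 / 8 + 3 / 8)) with (1 / 4) by field.
  lra.
Qed.

Lemma plus_weight_gap E c l1 lk : 0 < E -> 0 < c <= 1 / 2 -> 0 < lk ->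
  4 * (E + 2) ^ 2 / E * lk <= l1 ->
  1 / 2 <= l1 * (1 - c) / (l1 * (1 - c) + lk * (E + 1 + c)) - (1 - c) / (1 - c + (E + 1 + c)).
Proof.
  intros HE Hc Hlk Hl.
  replace ((1 - c) / (1 - c + (E + 1 + c))) with ((1 - c) / (E + 2)) by (f_equal; ring).
  set (p := (1 - c) / (E + 2)).
  assert (Hp : 0 <= p <= 1 / (E + 2)).
  { split; [apply Rlt_le, Rdiv_lt_0_compat; lra |].
    apply Rmult_le_compat_r; [apply Rlt_le, Rinv_0_lt_compat |]; lra. }
  assert (Hlow : (1 / 2 + p) * (E + 1 + c) <= E + 2).
  { assert (1 / (E + 2) <= 1 / 2) by (apply Rmult_le_compat_l, Rinv_le_contravar; lra).
    nra. }
  set (M := 4 * (E + 2) ^ 2 / E) in Hl.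
  assert (HM : 0 < M) by (apply Rdiv_lt_0_compat; nra).
  assert (Hhigh : E + 2 <= (1 - (1 / 2 + p)) * (1 - c) * M).
  { replace (E + 2) with (E / (2 * (E + 2)) * (1 / 2) * M) by (unfold M; field; lra).
    assert (E / (2 * (E + 2)) <= 1 - (1 / 2 + p))
      by (replace (E / (2 * (E + 2))) with (1 / 2 - 1 / (E + 2)) by (field; lra); lra).
    assert (0 <= E / (2 * (E + 2))) by (apply Rlt_le, Rdiv_lt_0_compat; lra).
    apply Rmult_le_compat_r; [lra|].
    apply Rmult_le_compat; lra. }
  assert (1 / 2 + p <= l1 * (1 - c) / (l1 * (1 - c) + lk * (E + 1 + c))).
  { assert (0 <= (1 - (1 / 2 + p)) * (1 - c)) by nra.
    assert (0 < l1) by (pose proof (Rmult_lt_0_compat M lk HM Hlk); lra).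
    apply le_ratio; [apply Rmult_lt_0_compat | apply Rmult_lt_0_compat |]; try lra.
    apply Rle_trans with (lk * (E + 2)); [nra|].
    apply Rle_trans with ((1 - (1 / 2 + p)) * (1 - c) * (M * lk)); nra. }
  lra.
Qed.

Lemma N_minus_far_from_ideal g E : 0 < g -> 0 < E ->
  exists (d : nat) (rho : Op),
    density d rho /\ 0 < energy d rho <= E + 1 /\
    tnorm (S d) (opsub (rho_minus d rho) (normalize (S d) (N_minus g d rho)))
      >= sqrt (E / (E + 1)).
Proof.
  intros Hg HE.
  destruct (exists_nat_exp_ge g 1 9 Hg) as (m & Hm1 & Hm9).
  assert (Hm0 : m <> 0%nat) by (intros ->; simpl in Hm1; lra).
  pose proof (lt_0_INR (S m) (Nat.lt_0_succ m)).
  set (c := 3 / (8 * INR (S m))).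
  assert (Hc : INR (S m) * c = 3 / 8) by (unfold c; field; lra).
  assert (Hc0 : 0 < c) by (unfold c; apply Rdiv_lt_0_compat; lra).
  assert (Hc1 : c <= 3 / 8) by (rewrite S_INR in Hc; nra).
  set (w i := atom 0 (7 / 8 - c) i + atom 1 (1 / 8) i + atom (S m) c i).
  exists (S (S m)), (diag w).
  assert (Hsupp : forall i, (S (S m) <= i)%nat -> w i = 0)
    by (intros i Hi; unfold w, atom; simpl_nat_tests; ring).
  split; [|split].
  - apply density_diag; auto.
    + intros i; unfold w, atom.
      destruct (Nat.eqb i 0), (Nat.eqb i 1), (Nat.eqb i (S m)); lra.
    + unfold w; rewrite !Rsum_plus, !Rsum_atom; simpl_nat_tests; lra.
  - rewrite energy_diag; unfold w.
    rewrite (Rsum_ext _ _ (fun i => INR i * atom 0 (7 / 8 - c) i + INR i * atom 1 (1 / 8) i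
                                    + INR i * atom (S m) c i))
      by (intros; ring).
    rewrite !Rsum_plus, !Rsum_mul_atom, Hc, INR_0, INR_1; simpl_nat_tests; lra.
  - assert (Hout : forall i, INR (S i) * w (S i) = atom 0 (1 / 8) i + atom m (3 / 8) i).
    { intros i; unfold w; rewrite !Rmult_plus_distr_l, !(atom_mul INR), atom_0_S, !atom_S, Hc.
      rewrite INR_1, Rmult_1_l, Rplus_0_l; reflexivity. }
    rewrite rho_minus_diag, N_minus_diag by exact Hsupp.
    apply Rle_ge; eapply Rle_trans;
      [| apply (tnorm_two_atoms_ge _ 0 m (1 / 8) (3 / 8) (fun i => damping g (S i)));
         auto using damping_pos; lia || lra].
    apply sqrt_ratio_le_twice_abs, minus_weight_gap; auto using damping_pos.
    pose proof (damping_pos g (S m) Hg).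
    rewrite <- (damping_add g 1 m); simpl Nat.add; nra.
Qed.

Lemma N_plus_far_from_ideal g E : 0 < g -> 0 < E ->
  exists (d : nat) (rho : Op),
    density d rho /\ 0 < energy d rho <= E + 1 /\
    tnorm (S d) (opsub (rho_plus d rho) (normalize (S d) (N_plus g d rho)))
      >= sqrt (E / (E + 1)).
Proof.
  intros Hg HE.
  destruct (exists_nat_exp_ge g (2 * (E + 1)) (4 * (E + 2) ^ 2 / E) Hg) as (k & Hk & Hdecay).
  assert (Hk0 : k <> 0%nat) by (intros ->; simpl in Hk; lra).
  set (c := (E + 1) / INR k).
  assert (Hc : INR k * c = E + 1) by (unfold c; field; lra).
  assert (Hc0 : 0 < c) by (unfold c; apply Rdiv_lt_0_compat; lra).
  assert (Hc1 : c <= 1 / 2) by nra.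
  set (w i := atom 0 (1 - c) i + atom k c i).
  exists (S k), (diag w).
  assert (Hsupp : forall i, (S k <= i)%nat -> w i = 0)
    by (intros i Hi; unfold w, atom; simpl_nat_tests; ring).
  split; [|split].
  - apply density_diag; auto.
    + intros i; unfold w, atom; destruct (Nat.eqb i 0), (Nat.eqb i k); lra.
    + unfold w; rewrite Rsum_two_atoms by lia; ring.
  - rewrite energy_diag; unfold w.
    rewrite (Rsum_ext _ _ (fun i => INR i * atom 0 (1 - c) i + INR i * atom k c i))
      by (intros; ring).
    rewrite Rsum_plus, !Rsum_mul_atom, Hc, INR_0; simpl_nat_tests; lra.
  - assert (Hout : forall i, INR i * w (pred i) = atom 1 (1 - c) i + atom (S k) (E + 1 + c) i).
    { intros i; unfold w; rewrite Rmult_plus_distr_l, !INR_mul_atom_pred, !S_INR, INR_0.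
      f_equal; f_equal; nra. }
    rewrite rho_plus_diag, N_plus_diag by exact Hsupp.
    apply Rle_ge; eapply Rle_trans;
      [| apply (tnorm_two_atoms_ge _ 1 (S k) (1 - c) (E + 1 + c) (damping g));
         auto using damping_pos; lia || lra].
    apply sqrt_ratio_le_twice_abs, plus_weight_gap; auto using damping_pos.
    pose proof (damping_pos g (S k) Hg).
    rewrite <- (damping_add g 1 k); simpl Nat.add; nra.
Qed.

Theorem proposition2 :
  (forall g E : R, 0 < g -> 0 < E ->
     exists (d : nat) (rho : Op),
       density d rho /\ 0 < energy d rho <= E + 1 /\
       tnorm (S d) (opsub (rho_minus d rho)
                          (normalize (S d) (N_minus g d rho)))
         >= sqrt (E / (E + 1))) /\
  (forall g E : R, 0 < g -> 0 < E ->
     exists (d : nat) (rho : Op),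
       density d rho /\ 0 < energy d rho <= E + 1 /\
       tnorm (S d) (opsub (rho_plus d rho)
                          (normalize (S d) (N_plus g d rho)))
         >= sqrt (E / (E + 1))).
Proof.
  split; [exact N_minus_far_from_ideal | exact N_plus_far_from_ideal].
Qed.
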